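(* In $NOM$, writing $\phi\vee\psi$ for $\neg(\neg\phi\wedge\neg\psi)$, the following rules are derivable for all finite sequences $\Gamma$ and formulas $\phi,\psi,\chi$: from $\Gamma\vdash\phi$ infer $\Gamma\vdash\phi\vee\psi$; from $\Gamma\vdash\psi$ infer $\Gamma\vdash\phi\vee\psi$; and from the five premises $\Gamma\vdash\phi\vee\psi$, $\Gamma,\phi\vdash\chi$, $\Gamma,\psi\vdash\chi$, $\Gamma,\chi,\phi\vdash\chi$, $\Gamma,\chi,\psi\vdash\chi$ infer $\Gamma\vdash\chi$.
   Context: The propositional deductive system $NOM$: formulas are built from propositional letters using $\wedge$, $\rightarrow$, $\neg$. Sequents are $\phi_1,\ldots,\phi_n\vdash\psi$ ($n\ge0$) with antecedent a finite ordered sequence. With $\Gamma$ a finite possibly empty sequence of formulas and $\phi,\psi,\chi$ formulas, the rules of $NOM$ are: (assumption) $\Gamma,\phi\vdash\phi$; (cut) $\Gamma\vdash\phi$, $\Gamma,\phi\vdash\psi$ $\Rightarrow$ $\Gamma\vdash\psi$; (paste) $\Gamma\vdash\phi$, $\Gamma\vdash\psi$ $\Rightarrow$ $\Gamma,\phi\vdash\psi$; (compatible exchange) $\Gamma,\phi,\psi\vdash\phi$, $\Gamma,\phi,\psi\vdash\chi$, $\Gamma,\psi,\phi\vdash\psi$ $\Rightarrow$ $\Gamma,\psi,\phi\vdash\chi$; ($\wedge$-intro) $\Gamma\vdash\phi$, $\Gamma\vdash\psi$ $\Rightarrow$ $\Gamma\vdash\phi\wedge\psi$; ($\wedge$-elim)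 $\Gamma\vdash\phi\wedge\psi$ $\Rightarrow$ $\Gamma\vdash\phi$ and $\Rightarrow$ $\Gamma\vdash\psi$; ($\rightarrow$-intro) $\Gamma,\phi\vdash\psi$ $\Rightarrow$ $\Gamma\vdash\phi\rightarrow\psi$; ($\rightarrow$-elim) $\Gamma\vdash\phi\rightarrow\psi$ $\Rightarrow$ $\Gamma,\phi\vdash\psi$; (excluded middle) $\Gamma,\phi\vdash\psi$, $\Gamma,\neg\phi\vdash\psi$ $\Rightarrow$ $\Gamma\vdash\psi$; (explosion) $\Gamma\vdash\neg\phi$ $\Rightarrow$ $\Gamma,\phi\vdash\psi$. A rule schema is derivable if in every instance its conclusion can be derived from its premises using these rules. *)

From Stdlib Require Import List.
Import ListNotations.

Inductive form : Type :=
| Var : nat -> form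
| And : form -> form -> form
| Imp : form -> form -> form
| Neg : form -> form.

Definition Or (phi psi : form) : form := Neg (And (Neg phi) (Neg psi)).

(* Sequents Gamma |- phi with Gamma an ordered finite list; "Gamma, phi" is
   Gamma ++ [phi].  [Der Hyp G phi] : the sequent G |- phi is derivable in NOM
   from the extra premise sequents in Hyp (used to express derivability of
   a rule: its conclusion is derivable from its premises). *)
Inductive Der (Hyp : list form -> form -> Prop) : list form -> form -> Prop :=
| d_prem : forall G phi, Hyp G phi -> Der Hyp G phi
| d_assum : forall G phi, Der Hyp (G ++ [phi]) phi
| d_cut : forall G phi psi,
    Der Hyp G phi -> Der Hyp (G ++ [phi]) psi -> Der Hyp G psi
| d_paste : forall G phi psi,
    Der Hyp G phi -> Der Hyp G psi -> Der Hyp (G ++ [phi]) psi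
| d_cexch : forall G phi psi chi,
    Der Hyp (G ++ [phi; psi]) phi ->
    Der Hyp (G ++ [phi; psi]) chi ->
    Der Hyp (G ++ [psi; phi]) psi ->
    Der Hyp (G ++ [psi; phi]) chi
| d_andI : forall G phi psi,
    Der Hyp G phi -> Der Hyp G psi -> Der Hyp G (And phi psi)
| d_andE1 : forall G phi psi, Der Hyp G (And phi psi) -> Der Hyp G phi
| d_andE2 : forall G phi psi, Der Hyp G (And phi psi) -> Der Hyp G psi
| d_impI : forall G phi psi,
    Der Hyp (G ++ [phi]) psi -> Der Hyp G (Imp phi psi)
| d_impE : forall G phi psi,
    Der Hyp G (Imp phi psi) -> Der Hyp (G ++ [phi]) psi
| d_em : forall G phi psi,
    Der Hyp (G ++ [phi]) psi -> Der Hyp (G ++ [Neg phi]) psi -> Der Hyp G psi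
| d_expl : forall G phi psi,
    Der Hyp G (Neg phi) -> Der Hyp (G ++ [phi]) psi.

Definition premises (l : list (list form * form)) : list form -> form -> Prop :=
  fun G phi => In (G, phi) l.

(* Disjunction introduction is the contrapositive of conjunction elimination,
   once double negation is derivable.  For disjunction elimination it suffices
   to contrapose the two case premises, Γ,¬χ ⊢ ¬φ and Γ,¬χ ⊢ ¬ψ: together they
   refute Γ ⊢ φ ∨ ψ in the context Γ,¬χ, and excluded middle on χ concludes.
   NOM has neither weakening nor free exchange, so the contraposition goes
   through the formula κ := χ ∧ (φ → χ): the cumulativity premise Γ,χ,φ ⊢ χ
   gives Γ,χ ⊢ κ, which makes the contexts Γ,¬χ and Γ,¬κ interderivable, and
   in Γ,¬κ the implication φ → χ, proved in Γ, is still available. *)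

From Stdlib Require Import List.
Import ListNotations.

Section Derived.

Variable Hyp : list form -> form -> Prop.

Local Notation "G ⊢ phi" := (Der Hyp G phi) (at level 70, no associativity).

Lemma der_cexch_snoc G phi psi chi :
  (G ++ [phi]) ++ [psi] ⊢ phi -> (G ++ [phi]) ++ [psi] ⊢ chi ->
  (G ++ [psi]) ++ [phi] ⊢ psi -> (G ++ [psi]) ++ [phi] ⊢ chi.
Proof.
  rewrite <- !app_assoc; simpl.
  apply d_cexch.
Qed.

Lemma der_expl2 G phi psi chi : G ⊢ Neg phi -> (G ++ [phi]) ++ [psi] ⊢ chi.
Proof. intros h. apply d_expl, d_expl, h. Qed.

Lemma der_dne G phi : G ⊢ Neg (Neg phi) -> G ⊢ phi.
Proof.
  intros h. apply d_em with phi.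
  - apply d_assum.
  - apply d_expl, h.
Qed.

Lemma der_dni G phi : G ⊢ phi -> G ⊢ Neg (Neg phi).
Proof.
  intros h.
  assert (himp : G ⊢ Imp phi (Neg (Neg phi))).
  { apply d_em with (Neg phi); apply d_impI.
    - apply d_expl, d_assum.
    - apply d_paste.
      + apply der_dne, d_assum.
      + apply d_assum. }
  apply d_cut with phi; [exact h |].
  apply d_impE, himp.
Qed.

Lemma der_mt G phi psi : G ⊢ Neg psi -> G ++ [phi] ⊢ psi -> G ⊢ Neg phi.
Proof.
  intros hnpsi hpsi. apply d_em with phi; [| apply d_assum].
  apply d_cut with psi; [exact hpsi |].
  apply der_cexch_snoc.
  - apply der_expl2, hnpsi.
  - apply der_expl2, hnpsi.
  - apply d_paste; [exact hpsi | apply d_assum].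
Qed.

Lemma der_last_equiv G phi psi chi :
  G ++ [phi] ⊢ psi -> G ++ [psi] ⊢ phi -> G ++ [psi] ⊢ chi -> G ++ [phi] ⊢ chi.
Proof.
  intros hpsi hphi hchi. apply d_cut with psi; [exact hpsi |].
  apply der_cexch_snoc.
  - apply d_paste; [exact hphi | apply d_assum].
  - apply d_paste; [exact hphi | exact hchi].
  - apply d_paste; [exact hpsi | apply d_assum].
Qed.

(* A substitute for the missing weakening rule. *)
Lemma der_weaken_neg G phi psi :
  G ⊢ phi -> (forall T, T ++ [psi] ⊢ phi) -> G ++ [Neg psi] ⊢ phi.
Proof.
  intros hphi hpsi. apply d_em with phi; [apply d_assum |].
  apply der_cexch_snoc.
  - apply der_expl2, der_dni, hphi.
  - apply der_expl2, der_dni, hphi.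
  - apply der_mt with phi; [apply d_assum | apply hpsi].
Qed.

Lemma der_neg_andl G phi psi : G ++ [Neg phi] ⊢ Neg (And phi psi).
Proof.
  apply der_mt with phi; [apply d_assum |].
  apply d_andE1 with psi, d_assum.
Qed.

Lemma der_neg_andl_conv G phi psi :
  G ++ [phi] ⊢ And phi psi -> G ++ [Neg (And phi psi)] ⊢ Neg phi.
Proof.
  intros hand. set (K := And phi psi).
  assert (hK : (G ++ [Neg K]) ++ [phi] ⊢ Neg K).
  { apply der_last_equiv with (Neg (Neg phi)).
    - apply der_dni, d_assum.
    - apply der_dne, d_assum.
    - apply der_weaken_neg; [apply d_assum | intros T; apply der_neg_andl]. }
  apply d_em with phi; [| apply d_assum].
  apply der_cexch_snoc; [| | exact hK]; apply d_expl, der_dni, hand.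
Qed.

Lemma der_contrapose G phi chi :
  G ++ [phi] ⊢ chi -> G ++ [chi; phi] ⊢ chi -> G ++ [Neg chi] ⊢ Neg phi.
Proof.
  intros hchi hcum. set (K := And chi (Imp phi chi)).
  assert (hKchi : G ++ [Neg K] ⊢ Neg chi).
  { apply der_neg_andl_conv, d_andI; [apply d_assum |].
    apply d_impI. rewrite <- app_assoc. exact hcum. }
  assert (hKimp : G ++ [Neg K] ⊢ Imp phi chi).
  { apply der_weaken_neg; [apply d_impI, hchi |].
    intros T. apply d_andE2 with chi, d_assum. }
  apply der_last_equiv with (Neg K); [apply der_neg_andl | exact hKchi |].
  apply der_mt with chi; [exact hKchi | apply d_impE, hKimp].
Qed.

Lemma der_orIl G phi psi : G ⊢ phi -> G ⊢ Or phi psi.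
Proof.
  intros h. apply der_mt with (Neg phi); [apply der_dni, h |].
  apply d_andE1 with (Neg psi), d_assum.
Qed.

Lemma der_orIr G phi psi : G ⊢ psi -> G ⊢ Or phi psi.
Proof.
  intros h. apply der_mt with (Neg psi); [apply der_dni, h |].
  apply d_andE2 with (Neg phi), d_assum.
Qed.

Lemma der_orE G phi psi chi :
  G ⊢ Or phi psi -> G ++ [phi] ⊢ chi -> G ++ [psi] ⊢ chi ->
  G ++ [chi; phi] ⊢ chi -> G ++ [chi; psi] ⊢ chi -> G ⊢ chi.
Proof.
  intros hor hphi hpsi hcphi hcpsi.
  apply der_dne, der_mt with (And (Neg phi) (Neg psi)); [exact hor |].
  apply d_andI; apply der_contrapose; assumption.
Qed.

End Derived.

Ltac premise := apply d_prem; unfold premises; simpl; auto 6.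

Theorem corollary4p6 :
  (forall (G : list form) (phi psi : form),
      Der (premises [(G, phi)]) G (Or phi psi)) /\
  (forall (G : list form) (phi psi : form),
      Der (premises [(G, psi)]) G (Or phi psi)) /\
  (forall (G : list form) (phi psi chi : form),
      Der (premises [(G, Or phi psi); (G ++ [phi], chi); (G ++ [psi], chi);
                     (G ++ [chi; phi], chi); (G ++ [chi; psi], chi)])
          G chi).
Proof.
  split; [| split]; intros.
  - apply der_orIl; premise.
  - apply der_orIr; premise.
  - apply der_orE with phi psi; premise.
Qed.
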